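(* The relations $\le_1$, $\le_2$ and $\le_3$ are partial orders on $\mathbf K_{\rm fnq}$.
   Context: $\mathbf K_{\rm fnq}$ is the class of structures $M$ in the vocabulary consisting of unary predicates $P,Q$, a ternary relation $E$, and $n$-ary relations $Q_{n,k}$ ($n,k\ge1$), such that: (a) $P^M,Q^M$ partition the universe of $M$ and $P^M\neq\emptyset$; (b) $E^M\subseteq P^M\times P^M\times Q^M$, and we write $aE^M_cb$ for $(a,b,c)\in E^M$; (c) for $c\in Q^M$, $E^M_c$ is an equivalence relation on $P^M$ and $\sup\{|a/E^M_c|:a\in P^M\}$ is finite; (d) $Q^M_{n,k}\subseteq (Q^M)^n$; (e) for $\bar c=\langle c_\ell:\ell<n\rangle\in{}^n(Q^M)$, $E^M_{\bar c}$ denotes the equivalence relation on $P^M$ generated by $\bigcup_\ell E^M_{c_\ell}$; (f) ${}^n(Q^M)=\bigcup_{k\ge1}Q^M_{n,k}$; (g) if $\bar c\in Q^M_{n,k}$ then $|a/E^M_{\bar c}|\le k$ for every $a\in P^M$. For $M,N\in\mathbf K_{\rm fnq}$: $M\le_1N$ iff $M$ is a substructure of $N$. $M\le_3N$ iff $M\subseteq N$ and for every countable $A\subseteq N$ with $A\cap Q^N$ finite there is a one-to-one homomorphism (e.g. an embedding) from $N{\restriction}A$ into $M$ which is the identity on $A\cap M$. $M\le_2N$ is defined like $\le_3$ but only for finite $A\subseteq N$. *)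

(* Structures of the vocabulary {P, Q, E, Q_{n,k}} whose
   universes are subsets of an ambient type U (so that "substructure" and
   equality of structures have their set-theoretic meaning). *)
From Stdlib Require Import List Relations Arith.
Import ListNotations.

Record fstr (U : Type) : Type := MkFstr {
  dom : U -> Prop;
  Pp  : U -> Prop;
  Qp  : U -> Prop;
  Er  : U -> U -> U -> Prop;             (* E^M(a,b,c), written a E_c b *)
  Qr  : nat -> nat -> list U -> Prop     (* Q^M_{n,k}, tuples as lists *)
}.
Arguments dom {U}. Arguments Pp {U}. Arguments Qp {U}.
Arguments Er {U}. Arguments Qr {U}.

Definition card_le {U : Type} (X : U -> Prop) (m : nat) : Prop :=
  forall l : list U, NoDup l -> (forall x, In x l -> X x) -> length l <= m.

Definition Ebar {U : Type} (M : fstr U) (cs : list U) : U -> U -> Prop :=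
  clos_refl_sym_trans U (fun x y => exists c, In c cs /\ Er M x y c).

Definition in_Kfnq {U : Type} (M : fstr U) : Prop :=
  (forall x, Pp M x -> dom M x) /\ (forall x, Qp M x -> dom M x) /\
  (forall x, dom M x -> Pp M x \/ Qp M x) /\
  (forall x, Pp M x -> Qp M x -> False) /\
  (exists x, Pp M x) /\
  (forall a b c, Er M a b c -> Pp M a /\ Pp M b /\ Qp M c) /\
  (forall c, Qp M c ->
     (forall a, Pp M a -> Er M a a c) /\
     (forall a b, Er M a b c -> Er M b a c) /\
     (forall a b d, Er M a b c -> Er M b d c -> Er M a d c) /\
     (exists m, forall a, Pp M a -> card_le (fun b => Er M a b c) m)) /\
  (* (d) and the vocabulary: n, k >= 1 *)
  (forall n k s, Qr M n k s ->
     1 <= n /\ 1 <= k /\ length s = n /\ Forall (Qp M) s) /\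
  (forall cs, 1 <= length cs -> Forall (Qp M) cs ->
     exists k, 1 <= k /\ Qr M (length cs) k cs) /\
  (forall n k cs, Qr M n k cs ->
     forall a, Pp M a -> card_le (Ebar M cs a) k).

Definition substr {U : Type} (M N : fstr U) : Prop :=
  (forall x, dom M x -> dom N x) /\
  (forall x, dom M x -> (Pp M x <-> Pp N x)) /\
  (forall x, dom M x -> (Qp M x <-> Qp N x)) /\
  (forall a b c, dom M a -> dom M b -> dom M c -> (Er M a b c <-> Er N a b c)) /\
  (forall n k s, Forall (dom M) s -> (Qr M n k s <-> Qr N n k s)).

Definition finite_set {U : Type} (A : U -> Prop) : Prop :=
  exists l : list U, forall x, A x -> In x l.

Definition countable_set {U : Type} (A : U -> Prop) : Prop :=
  exists g : U -> nat, forall x y, A x -> A y -> g x = g y -> x = y.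

Definition good_map {U : Type} (N : fstr U) (A : U -> Prop) (M : fstr U)
    (f : U -> U) : Prop :=
  (forall x, A x -> dom M (f x)) /\
  (forall x y, A x -> A y -> f x = f y -> x = y) /\
  (forall x, A x -> Pp N x -> Pp M (f x)) /\
  (forall x, A x -> Qp N x -> Qp M (f x)) /\
  (forall a b c, A a -> A b -> A c -> Er N a b c -> Er M (f a) (f b) (f c)) /\
  (forall n k s, Forall A s -> Qr N n k s -> Qr M n k (map f s)) /\
  (forall x, A x -> dom M x -> f x = x).

Definition le1 {U : Type} (M N : fstr U) : Prop :=
  in_Kfnq M /\ in_Kfnq N /\ substr M N.

Definition le2 {U : Type} (M N : fstr U) : Prop :=
  in_Kfnq M /\ in_Kfnq N /\ substr M N /\
  forall A : U -> Prop, (forall x, A x -> dom N x) -> finite_set A ->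
    exists f, good_map N A M f.

Definition le3 {U : Type} (M N : fstr U) : Prop :=
  in_Kfnq M /\ in_Kfnq N /\ substr M N /\
  forall A : U -> Prop, (forall x, A x -> dom N x) -> countable_set A ->
    finite_set (fun x => A x /\ Qp N x) ->
    exists f, good_map N A M f.

Definition partial_order_on_K {U : Type} (le : fstr U -> fstr U -> Prop) : Prop :=
  (forall M, in_Kfnq M -> le M M) /\
  (forall M N L, in_Kfnq M -> in_Kfnq N -> in_Kfnq L ->
      le M N -> le N L -> le M L) /\
  (forall M N, in_Kfnq M -> in_Kfnq N -> le M N -> le N M -> M = N).

(* Antisymmetry of <=1 holds because a structure of K_fnq has no relation
   outside its universe, so two mutual substructures coincide.  Every <=2 or
   <=3 step is a <=1 step, which gives antisymmetry of those as well, and the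
   identity gives reflexivity.  For transitivity, given M <= N <= L and a set
   A of L, compose the map g : L|A -> N with a map N|g[A] -> M; g[A] is again
   finite, resp. countable with finitely many Q-points: since g preserves P,
   P and Q are disjoint in N and cover L, g reflects Q. *)
From Stdlib Require Import List FunctionalExtensionality
  PropExtensionality ClassicalEpsilon.

Section PartialOrders.
Variable U : Type.
Implicit Types (M N L : fstr U) (A : U -> Prop) (f g : U -> U).

Definition supported M : Prop :=
  (forall x, Pp M x -> dom M x) /\ (forall x, Qp M x -> dom M x) /\
  (forall a b c, Er M a b c -> dom M a /\ dom M b /\ dom M c) /\
  (forall n k s, Qr M n k s -> Forall (dom M) s).

Lemma in_Kfnq_supported M : in_Kfnq M -> supported M.
Proof.
  intros (HP & HQ & _ & _ & _ & HE & _ & HR & _).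
  split; [exact HP | split; [exact HQ | split]].
  - intros a b c Habc; destruct (HE a b c Habc) as (Ha & Hb & Hc); auto.
  - intros n k s Hs; destruct (HR n k s Hs) as (_ & _ & _ & Hs').
    exact (Forall_impl _ HQ Hs').
Qed.

Lemma substr_refl M : substr M M.
Proof. repeat split; tauto. Qed.

Lemma substr_trans M N L : substr M N -> substr N L -> substr M L.
Proof.
  intros (d1 & p1 & q1 & e1 & r1) (d2 & p2 & q2 & e2 & r2).
  assert (lift : forall s, Forall (dom M) s -> Forall (dom N) s)
    by (intros s; apply Forall_impl; exact d1).
  repeat split; intros.
  - auto.
  - apply p2; auto; apply p1; auto.
  - apply p1; auto; apply p2; auto.
  - apply q2; auto; apply q1; auto.
  - apply q1; auto; apply q2; auto.
  - apply e2; auto; apply e1; auto.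
  - apply e1; auto; apply e2; auto.
  - apply r2; auto; apply r1; auto.
  - apply r1; auto; apply r2; auto.
Qed.

Lemma substr_antisym M N : supported M -> supported N ->
  substr M N -> substr N M -> M = N.
Proof.
  intros (PdM & QdM & EdM & RdM) (PdN & QdN & EdN & RdN)
    (d1 & p1 & q1 & e1 & r1) (d2 & p2 & q2 & e2 & r2).
  destruct M as [dM PM QM EM RM], N as [dN PN QN EN RN]; simpl in *.
  assert (Hd : dM = dN).
  { extensionality x; apply propositional_extensionality; split; auto. }
  assert (HP : PM = PN).
  { extensionality x; apply propositional_extensionality.
    split; intro Hx; [apply p1 | apply p2]; auto. }
  assert (HQ : QM = QN).
  { extensionality x; apply propositional_extensionality.
    split; intro Hx; [apply q1 | apply q2]; auto. }
  assert (HE : EM = EN).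
  { extensionality a; extensionality b; extensionality c.
    apply propositional_extensionality; split; intro Habc.
    - destruct (EdM _ _ _ Habc) as (? & ? & ?); apply e1; auto.
    - destruct (EdN _ _ _ Habc) as (? & ? & ?); apply e2; auto. }
  assert (HR : RM = RN).
  { extensionality n; extensionality k; extensionality s.
    apply propositional_extensionality; split; intro Hs.
    - apply r1; eauto.
    - apply r2; eauto. }
  subst; reflexivity.
Qed.

Lemma good_map_id N A : (forall x, A x -> dom N x) -> good_map N A N (fun x => x).
Proof.
  intros HA; repeat split; auto.
  intros n k s _ Hs; rewrite map_id; exact Hs.
Qed.

Definition image g A : U -> Prop := fun y => exists x, A x /\ g x = y.

Lemma image_sub g A (B : U -> Prop) : (forall x, A x -> B (g x)) ->
  forall y, image g A y -> B y.
Proof. intros HAB y (x & Ax & <-); auto. Qed.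

Lemma finite_set_image g A : finite_set A -> finite_set (image g A).
Proof.
  intros (l & Hl); exists (map g l).
  intros y (x & Ax & <-); apply in_map; auto.
Qed.

(* Choose a preimage of every point of g[A] and code it. *)
Lemma countable_set_image g A : countable_set A -> countable_set (image g A).
Proof.
  intros (h & Hh).
  pose (pre y := epsilon (inhabits y) (fun x => A x /\ g x = y)).
  exists (fun y => h (pre y)); intros y1 y2 Hy1 Hy2 Heq.
  destruct (epsilon_spec (inhabits y1) _ Hy1) as (A1 & <-).
  destruct (epsilon_spec (inhabits y2) _ Hy2) as (A2 & <-).
  f_equal; apply Hh; auto.
Qed.

Lemma good_map_comp L N M A g f :
  substr M N -> good_map L A N g -> good_map N (image g A) M f ->
  good_map L A M (fun x => f (g x)).
Proof.
  intros (dMN & _) (g1 & g2 & g3 & g4 & g5 & g6 & g7)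
    (f1 & f2 & f3 & f4 & f5 & f6 & f7).
  assert (HgA : forall x, A x -> image g A (g x)) by (intros x Ax; exists x; auto).
  split; [| split; [| split; [| split; [| split; [| split]]]]]; intros.
  - apply f1; auto.
  - apply g2; auto; apply f2; auto.
  - apply f3; auto.
  - apply f4; auto.
  - apply f5; auto.
  - rewrite <- map_map; apply f6; auto.
    apply Forall_map; exact (Forall_impl _ HgA H).
  - assert (Hgx : g x = x) by auto.
    rewrite Hgx; apply f7; [exists x; split |]; assumption.
Qed.

Lemma good_map_reflects_Q L N A g x : in_Kfnq L -> in_Kfnq N ->
  good_map L A N g -> (forall x, A x -> dom L x) ->
  A x -> Qp N (g x) -> Qp L x.
Proof.
  intros (_ & _ & HPQ & _) (_ & _ & _ & Hdisj & _) (_ & _ & gP & _) HA Ax HQ.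
  destruct (HPQ x (HA x Ax)) as [HP | HQx]; auto.
  exfalso; exact (Hdisj _ (gP x Ax HP) HQ).
Qed.

Lemma image_Q_part L N A g : in_Kfnq L -> in_Kfnq N ->
  good_map L A N g -> (forall x, A x -> dom L x) ->
  forall y, (image g A y /\ Qp N y) -> image g (fun x => A x /\ Qp L x) y.
Proof.
  intros HL HN Hg HA y ((x & Ax & <-) & HQ).
  exists x; split; [split; eauto using good_map_reflects_Q | reflexivity].
Qed.

Lemma le1_partial_order : partial_order_on_K (@le1 U).
Proof.
  split; [| split].
  - intros M HM; split; [| split]; auto using substr_refl.
  - intros M N L _ _ _ (HM & _ & HMN) (_ & HL & HNL).
    split; [| split]; eauto using substr_trans.
  - intros M N HM HN (_ & _ & HMN) (_ & _ & HNM).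
    apply substr_antisym; auto using in_Kfnq_supported.
Qed.

Lemma le2_trans M N L : le2 M N -> le2 N L -> le2 M L.
Proof.
  intros (HM & HN & HMN & embM) (_ & HL & HNL & embN).
  split; [| split; [| split]]; eauto using substr_trans.
  intros A HA Afin.
  destruct (embN A HA Afin) as (g & Hg).
  destruct (embM (image g A)) as (f & Hf).
  - apply image_sub; intros x Ax; destruct Hg as (g1 & _); auto.
  - apply finite_set_image; exact Afin.
  - exists (fun x => f (g x)); eapply good_map_comp; eauto.
Qed.

Lemma le3_trans M N L : le3 M N -> le3 N L -> le3 M L.
Proof.
  intros (HM & HN & HMN & embM) (_ & HL & HNL & embN).
  split; [| split; [| split]]; eauto using substr_trans.
  intros A HA Acount AQfin.
  destruct (embN A HA Acount AQfin) as (g & Hg).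
  destruct (embM (image g A)) as (f & Hf).
  - apply image_sub; intros x Ax; destruct Hg as (g1 & _); auto.
  - apply countable_set_image; exact Acount.
  - destruct (finite_set_image g _ AQfin) as (l & Hl).
    exists l; intros y Hy; apply Hl, (image_Q_part L N A g HL HN Hg HA y Hy).
  - exists (fun x => f (g x)); eapply good_map_comp; eauto.
Qed.

Lemma le2_partial_order : partial_order_on_K (@le2 U).
Proof.
  split; [| split].
  - intros M HM; split; [| split; [| split]]; auto using substr_refl.
    intros A HA _; exists (fun x => x); apply good_map_id; exact HA.
  - intros M N L _ _ _; apply le2_trans.
  - intros M N HM HN (_ & _ & HMN & _) (_ & _ & HNM & _).
    apply substr_antisym; auto using in_Kfnq_supported.
Qed.

Lemma le3_partial_order : partial_order_on_K (@le3 U).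
Proof.
  split; [| split].
  - intros M HM; split; [| split; [| split]]; auto using substr_refl.
    intros A HA _ _; exists (fun x => x); apply good_map_id; exact HA.
  - intros M N L _ _ _; apply le3_trans.
  - intros M N HM HN (_ & _ & HMN & _) (_ & _ & HNM & _).
    apply substr_antisym; auto using in_Kfnq_supported.
Qed.

End PartialOrders.

Theorem claim3p3 (U : Type) :
  partial_order_on_K (@le1 U) /\ partial_order_on_K (@le2 U) /\
  partial_order_on_K (@le3 U).
Proof.
  split; [| split].
  - apply le1_partial_order.
  - apply le2_partial_order.
  - apply le3_partial_order.
Qed.
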